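(* Let $A$ be a real $n\times n$ matrix, $\alpha>0$, and $F_{A,\alpha}(u)=|u|^\alpha Au$ for $u\in\mathbb R^n$. If $$\frac{\mathrm{Tr}(A)}{|A|}\ge\sqrt{n-\frac1{(1+\alpha)^2}},$$ then $F_{A,\alpha}$ is monotone. If the inequality is strict, then $F_{A,\alpha}$ is $(\alpha+2)$-monotone.
   Context: $|u|$ is the Euclidean norm of $u$; for a matrix $A=(a_{ij})$, $|A|=(\sum_{i,j}a_{ij}^2)^{1/2}$ and $\mathrm{Tr}$ is the trace. A map $F:\mathbb R^n\to\mathbb R^n$ is monotone if $(F(u)-F(v))\cdot(u-v)\ge0$ for all $u,v$; for $\beta>0$ it is $\beta$-monotone if there is $C>0$ with $(F(u)-F(v))\cdot(u-v)\ge C|u-v|^\beta$ for all $u,v$. *)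

From HB Require Import structures.
From mathcomp Require Import all_boot all_order all_algebra.
From mathcomp Require Import reals exp.
Set Implicit Arguments. Unset Strict Implicit. Unset Printing Implicit Defensive.
Import Order.TTheory GRing.Theory Num.Theory.
Local Open Scope ring_scope.

Definition dotv (R : realType) (n : nat) (u v : 'cV[R]_n) : R :=
  \sum_(i < n) u i 0 * v i 0.
Definition enorm (R : realType) (n : nat) (u : 'cV[R]_n) : R :=
  Num.sqrt (\sum_(i < n) u i 0 ^+ 2).
Definition frob (R : realType) (n : nat) (A : 'M[R]_n) : R :=
  Num.sqrt (\sum_(i < n) \sum_(j < n) A i j ^+ 2).

(* F_{A,alpha}(u) = |u|^alpha A u  (powR 0 alpha = 0 for alpha > 0) *)
Definition F_Aalpha (R : realType) (n : nat) (A : 'M[R]_n) (alpha : R)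
  (u : 'cV[R]_n) : 'cV[R]_n := powR (enorm u) alpha *: (A *m u).

Definition monotone_map (R : realType) (n : nat) (F : 'cV[R]_n -> 'cV[R]_n) :=
  forall u v, 0 <= dotv (F u - F v) (u - v).

Definition beta_monotone (R : realType) (n : nat) (beta : R)
  (F : 'cV[R]_n -> 'cV[R]_n) :=
  exists C : R, 0 < C /\
    forall u v, C * powR (enorm (u - v)) beta <= dotv (F u - F v) (u - v).

From HB Require Import structures.
From mathcomp Require Import all_boot all_order all_algebra.
From mathcomp Require Import reals exp.
From mathcomp Require Import ring lra.
Import Order.TTheory GRing.Theory Num.Theory.
Local Open Scope ring_scope.
Set Implicit Arguments. Unset Strict Implicit.

(* Write G u = |u|^alpha u, so that F_{A,alpha} = A o G, and put w = G u - G v, d = u - v.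
   Two elementary estimates hold for G: |w| |d| <= (1 + alpha) <w, d>, which reduces to the
   tangent-line inequality for t |-> t^(1+alpha), and |d|^(alpha+2) <= 2^(alpha+1) <w, d>.
   For lam > 0, writing lam A = I + (lam A - I) and bounding |<(lam A - I) w, d>| by
   |lam A - I| |w| |d| gives lam <F u - F v, d> >= (1 - (1 + alpha) |lam A - I|) <w, d>.
   The best choice lam = Tr A / |A|^2 yields |lam A - I|^2 = n - (Tr A / |A|)^2, so the
   hypothesis on Tr A / |A| says precisely that (1 + alpha) |lam A - I| <= 1 (resp. < 1). *)

Section Scalar.
Variable R : realType.

Lemma Cauchy_Schwarz (I : finType) (f g : I -> R) :
  (\sum_i f i * g i) ^+ 2 <= (\sum_i f i ^+ 2) * (\sum_i g i ^+ 2).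
Proof.
set X := \sum_i f i ^+ 2; set Y := \sum_i g i ^+ 2; set Z := \sum_i f i * g i.
have lagrange : \sum_i \sum_j (f i * g j - f j * g i) ^+ 2 = 2 * (X * Y - Z ^+ 2).
  transitivity (\sum_i (f i ^+ 2 * Y + g i ^+ 2 * X - 2 * (f i * g i * Z))).
    apply: eq_bigr => i _; rewrite /X /Y /Z !mulr_sumr -!big_split -sumrN -big_split.
    by apply: eq_bigr => j _ /=; ring.
  rewrite sumrB big_split /= -mulr_sumr -!mulr_suml -/X -/Y -/Z; ring.
have : 0 <= \sum_i \sum_j (f i * g j - f j * g i) ^+ 2.
  by apply: sumr_ge0 => i _; apply: sumr_ge0 => j _; exact: sqr_ge0.
rewrite lagrange; lra.
Qed.

Lemma powR_tangent (alpha a b : R) : 0 < alpha -> 0 <= a -> 0 <= b ->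
  powR a alpha * ((1 + alpha) * b - alpha * a) <= b * powR b alpha.
Proof.
move=> alpha_gt0 a0 b0.
have [->|bpos] := eqVneq b 0.
  by rewrite mulr0 sub0r mulrN mul0r oppr_le0 !mulr_ge0 ?powR_ge0 ?(ltW alpha_gt0).
have [->|apos] := eqVneq a 0.
  by rewrite powR0 ?gt_eqF // mul0r mulr_ge0 ?powR_ge0.
have bp : 0 < b by rewrite lt_def bpos.
have ap : 0 < a by rewrite lt_def apos.
have bap : 0 < b / a by exact: divr_gt0.
have ln_ge : 1 - a / b <= ln (b / a).
  have : ln (b / a)^-1 <= a / b - 1.
    have ab_pos : 0 < a / b by exact: divr_gt0.
    rewrite invf_div; have := @le_ln1Dx R (a / b - 1); rewrite [1 + _]addrC subrK.
    by apply; lra.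
  by rewrite lnV ?posrE //; lra.
have pow_ge : 1 + alpha * (1 - a / b) <= powR (b / a) alpha.
  rewrite /powR gt_eqF //; apply: le_trans (expR_ge1Dx _).
  by rewrite lerD2l ler_pM2l.
have -> : powR b alpha = powR a alpha * powR (b / a) alpha.
  by rewrite -powRM ?ltW // mulrC divfK ?gt_eqF.
have -> : (1 + alpha) * b - alpha * a = b * (1 + alpha * (1 - a / b)) by field; rewrite gt_eqF.
by rewrite mulrCA ler_wpM2l // ler_wpM2l ?powR_ge0.
Qed.

Lemma radial_angle_scalar (alpha a b x y p : R) : 0 < alpha -> 0 <= b <= a -> 0 <= y <= x ->
  x * ((1 + alpha) * b - alpha * a) <= b * y -> p <= a * b ->
  (x ^+ 2 * a ^+ 2 + y ^+ 2 * b ^+ 2 - 2 * x * y * p) * (a ^+ 2 + b ^+ 2 - 2 * p)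
    <= (1 + alpha) ^+ 2 * (x * a ^+ 2 + y * b ^+ 2 - (x + y) * p) ^+ 2.
Proof.
move=> alpha_gt0 /andP[b0 ba] /andP[y0 yx] tangent pab.
set S := x * a ^+ 2 + y * b ^+ 2 - (x + y) * p.
set W2 := x ^+ 2 * a ^+ 2 + y ^+ 2 * b ^+ 2 - 2 * x * y * p.
set D2 := a ^+ 2 + b ^+ 2 - 2 * p.
have x0 : 0 <= x by lra.
have gap0 : 0 <= a * b - p by lra.
have D2_ge0 : 0 <= D2 by rewrite /D2; nra.
have W2_ge0 : 0 <= W2.
  have : 0 <= x * y * (a * b - p) by rewrite !mulr_ge0.
  have := sqr_ge0 (x * a - y * b); rewrite /W2; nra.
set W := x * a - y * b; set V := x * (a - b).
(* [V <= W <= (1 + alpha) V]: the lower bound is [y <= x], the upper one the tangent inequality *)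
have VW : V <= W by rewrite /V /W; nra.
have WV : W <= (1 + alpha) * V by rewrite /V /W; nra.
have V0 : 0 <= V by rewrite /V mulr_ge0 // subr_ge0.
have sum_le : W2 + x ^+ 2 * D2 <= 2 * (1 + alpha) * x * S.
  have -> : 2 * (1 + alpha) * x * S = (W2 + x ^+ 2 * D2) +
      (2 * (1 + alpha) * W * V - (W ^+ 2 + V ^+ 2)) + 2 * alpha * x * (x + y) * (a * b - p).
    by rewrite /S /W2 /D2 /W /V; ring.
  have : 0 <= 2 * alpha * x * (x + y) * (a * b - p).
    by rewrite !mulr_ge0 ?(addr_ge0 x0 y0) ?(ltW alpha_gt0).
  nra.
(* AM-GM: [4 x^2 D2 W2 <= (W2 + x^2 D2)^2] *)
have amgm : 4 * x ^+ 2 * (W2 * D2) <= 4 * x ^+ 2 * ((1 + alpha) ^+ 2 * S ^+ 2).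
  have : (W2 + x ^+ 2 * D2) ^+ 2 <= (2 * (1 + alpha) * x * S) ^+ 2.
    have lhs_ge0 : 0 <= W2 + x ^+ 2 * D2 by rewrite addr_ge0 // mulr_ge0 ?sqr_ge0.
    by rewrite ler_pXn2r ?nnegrE // (le_trans lhs_ge0 sum_le).
  have := sqr_ge0 (W2 - x ^+ 2 * D2); nra.
have [x_eq0|x_gt0] := eqVneq x 0.
  have y_eq0 : y = 0 by lra.
  by rewrite /W2 x_eq0 y_eq0; nra.
by rewrite -(ler_pM2l (_ : 0 < 4 * x ^+ 2)) // mulr_gt0 // exprn_gt0 // lt_def x_gt0.
Qed.

Lemma radial_gap_scalar (a b x y p : R) : 0 <= b <= a -> 0 <= y <= x -> p <= a * b ->
  x * (a ^+ 2 + b ^+ 2 - 2 * p) <= 2 * (x * a ^+ 2 + y * b ^+ 2 - (x + y) * p).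
Proof.
move=> /andP[b0 ba] /andP[y0 yx] pab.
have D2_ge0 : 0 <= a ^+ 2 + b ^+ 2 - 2 * p by nra.
have : 0 <= (x - y) * (a ^+ 2 - b ^+ 2).
  by rewrite mulr_ge0 // subr_ge0 ?ler_pXn2r ?nnegrE //; lra.
have : 0 <= y * (a ^+ 2 + b ^+ 2 - 2 * p) by rewrite mulr_ge0.
nra.
Qed.
End Scalar.

Section Euclid.
Variables (R : realType) (n : nat).
Implicit Types (u v w : 'cV[R]_n) (B : 'M[R]_n).

Lemma dotvDl u v w : dotv (u + v) w = dotv u w + dotv v w.
Proof. by rewrite /dotv -big_split; apply: eq_bigr => i _; rewrite !mxE mulrDl. Qed.

Lemma dotvZl c u v : dotv (c *: u) v = c * dotv u v.
Proof. by rewrite /dotv mulr_sumr; apply: eq_bigr => i _; rewrite !mxE mulrA. Qed.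

Lemma dotvNN u v : dotv (- u) (- v) = dotv u v.
Proof. by apply: eq_bigr => i _; rewrite !mxE mulrNN. Qed.

Lemma dotv_scaleB x y x' y' u v :
  dotv (x *: u - y *: v) (x' *: u - y' *: v) =
  x * x' * dotv u u + y * y' * dotv v v - (x * y' + y * x') * dotv u v.
Proof.
rewrite /dotv !mulr_sumr -big_split -sumrB; apply: eq_bigr => i _ /=.
by rewrite !mxE; ring.
Qed.

Lemma enorm_sqrE u : enorm u ^+ 2 = \sum_i u i 0 ^+ 2.
Proof. by rewrite sqr_sqrtr // sumr_ge0 // => i _; rewrite sqr_ge0. Qed.

Lemma enorm_sqr u : enorm u ^+ 2 = dotv u u.
Proof. by rewrite enorm_sqrE; apply: eq_bigr => i _; rewrite expr2. Qed.

Lemma enormN u : enorm (- u) = enorm u.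
Proof. by congr Num.sqrt; apply: eq_bigr => i _; rewrite mxE sqrrN. Qed.

Lemma ler_norm_sqr (x y : R) : 0 <= y -> x ^+ 2 <= y ^+ 2 -> `|x| <= y.
Proof. by move=> y0 le_sqr; rewrite ler_norml; apply/andP; split; nra. Qed.

Lemma norm_dotv_le u v : `|dotv u v| <= enorm u * enorm v.
Proof.
apply: ler_norm_sqr; first by rewrite mulr_ge0 ?sqrtr_ge0.
rewrite exprMn !enorm_sqr.
exact: (Cauchy_Schwarz (fun i => u i 0) (fun i => v i 0)).
Qed.

Definition radial (alpha : R) u : 'cV[R]_n := powR (enorm u) alpha *: u.

Section RadialPower.
Variable alpha : R.
Hypothesis alpha_gt0 : 0 < alpha.

Let w u v := radial alpha u - radial alpha v.

Lemma radial_estimates_ordered u v : enorm v <= enorm u ->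
  enorm (w u v) * enorm (u - v) <= (1 + alpha) * dotv (w u v) (u - v) /\
  powR (enorm (u - v)) (alpha + 2) <= powR 2 (alpha + 1) * dotv (w u v) (u - v).
Proof.
rewrite /w /radial; set a := enorm u; set b := enorm v => vu.
set x := powR a alpha; set y := powR b alpha; set p := dotv u v; set e := enorm (u - v).
have [a0 b0] : 0 <= a /\ 0 <= b by split; apply: sqrtr_ge0.
have [y0 yx] : 0 <= y /\ y <= x.
  by split; [exact: powR_ge0 | apply: ge0_ler_powR; rewrite ?nnegrE ?(ltW alpha_gt0)].
have /andP[pl pu] : - (a * b) <= p <= a * b by rewrite -ler_norml; apply: norm_dotv_le.
have d_eq : u - v = 1 *: u - 1 *: v by rewrite !scale1r.
have S_eq : dotv (x *: u - y *: v) (u - v) = x * a ^+ 2 + y * b ^+ 2 - (x + y) * p.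
  by rewrite d_eq dotv_scaleB -!enorm_sqr -/a -/b -/p; ring.
have W2_eq : enorm (x *: u - y *: v) ^+ 2 = x ^+ 2 * a ^+ 2 + y ^+ 2 * b ^+ 2 - 2 * x * y * p.
  by rewrite enorm_sqr dotv_scaleB -!enorm_sqr -/a -/b -/p; ring.
have D2_eq : e ^+ 2 = a ^+ 2 + b ^+ 2 - 2 * p.
  by rewrite /e enorm_sqr d_eq dotv_scaleB -!enorm_sqr -/a -/b -/p; ring.
have gap : x * e ^+ 2 <= 2 * dotv (x *: u - y *: v) (u - v).
  by rewrite D2_eq S_eq radial_gap_scalar ?b0 ?y0.
have S_ge0 : 0 <= dotv (x *: u - y *: v) (u - v).
  by have := le_trans (mulr_ge0 (powR_ge0 a alpha) (sqr_ge0 e)) gap; rewrite pmulr_rge0.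
split.
  have alpha1_ge0 : 0 <= 1 + alpha by rewrite addr_ge0 ?ler01 ?(ltW alpha_gt0).
  rewrite -(ler_pXn2r (_ : 0 < 2)%N) ?nnegrE ?mulr_ge0 ?sqrtr_ge0 //.
  rewrite !exprMn W2_eq D2_eq S_eq radial_angle_scalar ?b0 ?y0 //.
  exact: powR_tangent.
have e_le : e <= 2 * a.
  by rewrite -(ler_pXn2r (_ : 0 < 2)%N) ?nnegrE ?sqrtr_ge0 ?mulr_ge0 // D2_eq; nra.
have e_pow : powR e alpha <= powR 2 alpha * x.
  rewrite /x -powRM //.
  by apply: ge0_ler_powR; rewrite ?nnegrE ?mulr_ge0 ?sqrtr_ge0 ?(ltW alpha_gt0).
have alpha2_neq0 : alpha + 2 != 0 by rewrite gt_eqF // addr_gt0.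
rewrite powRD ?(negbTE alpha2_neq0) //.
rewrite powR_mulrn ?sqrtr_ge0 // powRD ?powRr1 //; last by rewrite pnatr_eq0 implybT.
apply: (le_trans (ler_wpM2r (sqr_ge0 e) e_pow)).
by rewrite -!mulrA ler_wpM2l ?powR_ge0.
Qed.

Lemma radial_estimates u v :
  enorm (w u v) * enorm (u - v) <= (1 + alpha) * dotv (w u v) (u - v) /\
  powR (enorm (u - v)) (alpha + 2) <= powR 2 (alpha + 1) * dotv (w u v) (u - v).
Proof.
have [|/ltW uv] := leP (enorm v) (enorm u); first exact: radial_estimates_ordered.
have := radial_estimates_ordered uv; rewrite /w.
by rewrite -(opprB u v) -(opprB (radial alpha u)) dotvNN !enormN.
Qed.
End RadialPower.

Lemma frob_sqr B : frob B ^+ 2 = \sum_i \sum_j B i j ^+ 2.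
Proof.
by rewrite sqr_sqrtr // sumr_ge0 // => i _; rewrite sumr_ge0 // => j _; rewrite sqr_ge0.
Qed.

Lemma enorm_mulmx_le B u : enorm (B *m u) <= frob B * enorm u.
Proof.
rewrite -(ler_pXn2r (_ : 0 < 2)%N) ?nnegrE ?mulr_ge0 ?sqrtr_ge0 //.
rewrite exprMn frob_sqr !enorm_sqrE mulr_suml; apply: ler_sum => i _.
rewrite mxE; exact: Cauchy_Schwarz.
Qed.

Lemma norm_dotv_mulmx_le B u v : `|dotv (B *m u) v| <= frob B * enorm u * enorm v.
Proof.
apply: le_trans (norm_dotv_le _ _) _.
by rewrite ler_wpM2r ?sqrtr_ge0 ?enorm_mulmx_le.
Qed.

Lemma frob_shift_sqr (A : 'M[R]_n) lam :
  frob (lam *: A - 1%:M) ^+ 2 = lam ^+ 2 * frob A ^+ 2 - 2 * lam * \tr A + n%:R.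
Proof.
have row i : \sum_j (lam *: A - 1%:M) i j ^+ 2 =
    lam ^+ 2 * (\sum_j A i j ^+ 2) - 2 * lam * A i i + 1.
  rewrite (bigD1 i) //= [X in _ = _ * X - _ + _](bigD1 i) //= !mxE eqxx mulr1n.
  have -> : \sum_(j | j != i) (lam *: A - 1%:M) i j ^+ 2 =
            \sum_(j | j != i) lam ^+ 2 * A i j ^+ 2.
    by apply: eq_bigr => j ji; rewrite !mxE eq_sym (negbTE ji) mulr0n subr0 exprMn.
  rewrite -mulr_sumr; ring.
rewrite !frob_sqr (eq_bigr _ (fun i _ => row i)) /= big_split /= sumrB -mulr_sumr.
by rewrite sumr_const card_ord /mxtrace -mulr_sumr; ring.
Qed.

Lemma F_Aalpha_ge (A : 'M[R]_n) alpha lam u v : 0 < alpha -> 0 < lam ->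
  let c := (1 + alpha) * frob (lam *: A - 1%:M) in c <= 1 ->
  (1 - c) / (lam * powR 2 (alpha + 1)) * powR (enorm (u - v)) (alpha + 2)
    <= dotv (F_Aalpha A alpha u - F_Aalpha A alpha v) (u - v).
Proof.
move=> alpha_gt0 lam_gt0 c c_le1.
set w := radial alpha u - radial alpha v; set d := u - v.
set K := powR 2 (alpha + 1); set S := dotv w d.
have F_diff : F_Aalpha A alpha u - F_Aalpha A alpha v = A *m w.
  by rewrite /F_Aalpha /w /radial mulmxBr !scalemxAr.
have shift : lam * dotv (A *m w) d = S + dotv ((lam *: A - 1%:M) *m w) d.
  by rewrite -dotvDl mulmxBl mul1mx addrC subrK -scalemxAl dotvZl.
have [angle coercive] : enorm w * enorm d <= (1 + alpha) * S /\
    powR (enorm d) (alpha + 2) <= K * S := radial_estimates alpha_gt0 u v.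
have lower : (1 - c) * S <= lam * dotv (A *m w) d.
  have := norm_dotv_mulmx_le (lam *: A - 1%:M) w d; rewrite ler_norml => /andP[cross _].
  have := ler_wpM2l (sqrtr_ge0 _ : 0 <= frob (lam *: A - 1%:M)) angle.
  rewrite shift /c; nra.
have K_gt0 : 0 < K by rewrite powR_gt0.
rewrite F_diff mulrAC ler_pdivrMr ?mulr_gt0 //.
apply: le_trans (ler_wpM2l _ coercive) _; first by rewrite subr_ge0.
have -> : dotv (A *m w) d * (lam * K) = K * (lam * dotv (A *m w) d) by ring.
by rewrite mulrCA ler_pM2l.
Qed.

Section OptimalShift.
Variables (A : 'M[R]_n) (alpha : R).
Hypotheses (n_gt0 : (0 < n)%N) (alpha_gt0 : 0 < alpha).

Let s := Num.sqrt (n%:R - 1 / (1 + alpha) ^+ 2).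
Let q := \tr A / frob A.

Lemma optimal_shift_contraction : s <= q -> exists2 lam, 0 < lam &
  ((1 + alpha) * frob (lam *: A - 1%:M)) ^+ 2 = 1 - (1 + alpha) ^+ 2 * (q ^+ 2 - s ^+ 2).
Proof.
move=> s_le_q; have alpha1_gt1 : 1 < 1 + alpha by rewrite ltrDl.
have inv_lt1 : 1 / (1 + alpha) ^+ 2 < 1.
  by rewrite ltr_pdivrMr ?exprn_gt0 ?(lt_trans ltr01) // mul1r; nra.
have n_ge1 : 1 <= n%:R :> R by rewrite ler1n.
have s_gt0 : 0 < s by rewrite sqrtr_gt0 subr_gt0 (lt_le_trans inv_lt1).
have s_sqr : s ^+ 2 = n%:R - 1 / (1 + alpha) ^+ 2 by rewrite sqr_sqrtr // ltW // -sqrtr_gt0.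
have q_gt0 : 0 < q := lt_le_trans s_gt0 s_le_q.
have frob_neq0 : frob A != 0.
  by apply: contraTneq q_gt0 => frob0; rewrite /q frob0 invr0 mulr0 ltxx.
exists (q / frob A); first by rewrite divr_gt0 // lt_def frob_neq0 sqrtr_ge0.
rewrite exprMn frob_shift_sqr s_sqr /q; field.
by rewrite frob_neq0 gt_eqF // (lt_trans ltr01).
Qed.

Lemma contracting_shift :
  s <= q -> exists2 lam, 0 < lam & (1 + alpha) * frob (lam *: A - 1%:M) <= 1.
Proof.
move=> s_le_q; have [lam lam_gt0 c_sqr] := optimal_shift_contraction s_le_q.
have sqr_le : s ^+ 2 <= q ^+ 2.
  by rewrite ler_pXn2r ?nnegrE ?sqrtr_ge0 ?(le_trans (sqrtr_ge0 _) s_le_q).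
exists lam => //.
rewrite -(expr_le1 (_ : 0 < 2)%N) ?mulr_ge0 ?sqrtr_ge0 ?addr_ge0 ?(ltW alpha_gt0) //.
by rewrite c_sqr gerBl mulr_ge0 ?sqr_ge0 ?subr_ge0.
Qed.

Lemma strictly_contracting_shift :
  s < q -> exists2 lam, 0 < lam & (1 + alpha) * frob (lam *: A - 1%:M) < 1.
Proof.
move=> s_lt_q; have [lam lam_gt0 c_sqr] := optimal_shift_contraction (ltW s_lt_q).
have sqr_lt : s ^+ 2 < q ^+ 2.
  by rewrite ltr_pXn2r ?nnegrE ?sqrtr_ge0 ?(le_trans (sqrtr_ge0 _) (ltW s_lt_q)).
exists lam => //.
rewrite -(expr_lt1 (_ : 0 < 2)%N) ?mulr_ge0 ?sqrtr_ge0 ?addr_ge0 ?(ltW alpha_gt0) //.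
by rewrite c_sqr gtrBl mulr_gt0 ?subr_gt0 // exprn_gt0 // addr_gt0.
Qed.
End OptimalShift.
End Euclid.

Theorem mainTheorem12 (R : realType) (n : nat) (A : 'M[R]_n) (alpha : R)
  (halpha : 0 < alpha) :
  (Num.sqrt (n%:R - 1 / (1 + alpha) ^+ 2) <= \tr A / frob A ->
     monotone_map (F_Aalpha A alpha)) /\
  (Num.sqrt (n%:R - 1 / (1 + alpha) ^+ 2) < \tr A / frob A ->
     beta_monotone (alpha + 2) (F_Aalpha A alpha)).
Proof.
case: n A => [|m] A.
  split=> [_ u v|]; first by rewrite /dotv big_ord0.
  by rewrite /mxtrace big_ord0 mul0r ltNge sqrtr_ge0.
have K_gt0 : 0 < powR 2 (alpha + 1) by rewrite powR_gt0.
split=> [s_le_q | s_lt_q].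
- have [lam lam_gt0 c_le1] := contracting_shift (ltn0Sn m) halpha s_le_q.
  move=> u v; apply: le_trans (F_Aalpha_ge u v halpha lam_gt0 c_le1).
  by rewrite mulr_ge0 ?powR_ge0 // divr_ge0 ?subr_ge0 // ltW // mulr_gt0.
- have [lam lam_gt0 c_lt1] := strictly_contracting_shift (ltn0Sn m) halpha s_lt_q.
  exists ((1 - (1 + alpha) * frob (lam *: A - 1%:M)) / (lam * powR 2 (alpha + 1))).
  split; first by rewrite divr_gt0 ?subr_gt0 // mulr_gt0.
  by move=> u v; apply: F_Aalpha_ge => //; exact: ltW.
Qed.
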